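(* Let $m,n,k$ be positive integers and $i,j$ non-negative integers such that $i<\frac{n}{2}-1$ and $j<\frac{k}{2}-1$. Then $$|\mathrm{WHom}^{ij}(P_m,P_n\square P_k)|=\sum_{h=0}^{m-1}\binom{m-1}{h}\,|\mathrm{Hom}^i(P_{h+1},P_n)|\,|\mathrm{WHom}^j(P_{m-h},P_k)|.$$
   Context: For a positive integer $n$, $P_n$ denotes the path with vertex set $\{0,1,\dots,n-1\}$ and edge set $\{\{i,i+1\} : i=0,\dots,n-2\}$. The Cartesian product $P_n\square P_k$ has vertex set $\{0,\dots,n-1\}\times\{0,\dots,k-1\}$, with $\{(a,u),(b,v)\}$ an edge iff either $a=b$ and $\{u,v\}\in E(P_k)$, or $\{a,b\}\in E(P_n)$ and $u=v$. A homomorphism $f:G\to H$ is a map $V(G)\to V(H)$ with $\{f(x),f(y)\}\in E(H)$ for all $\{x,y\}\in E(G)$; a weak homomorphism is a map with $f(x)=f(y)$ or $\{f(x),f(y)\}\in E(H)$ for all $\{x,y\}\in E(G)$. $\mathrm{Hom}^i(P_a,P_n)$ is the set of homomorphisms $f:P_a\to P_n$ with $f(0)=i$; $\mathrm{WHom}^j(P_a,P_k)$ is the set of weak homomorphisms $f:P_a\to P_k$ with $f(0)=j$; $\mathrm{WHom}^{ij}(P_m,P_n\square P_k)$ is the set of weak homomorphisms $f:P_m\to P_n\square P_k$ with $f(0)=(i,j)$. *)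

From mathcomp Require Import all_boot all_order all_algebra.
Set Implicit Arguments. Unset Strict Implicit. Unset Printing Implicit Defensive.

Definition path_adj (n : nat) : rel 'I_n :=
  fun a b => (a.+1 == b :> nat) || (b.+1 == a :> nat).

Definition box_adj (n k : nat) : rel ('I_n * 'I_k) :=
  fun x y => ((x.1 == y.1) && path_adj x.2 y.2) ||
             (path_adj x.1 y.1 && (x.2 == y.2)).

Definition is_hom (T U : finType) (eT : rel T) (eU : rel U) (f : T -> U) : bool :=
  [forall x, forall y, eT x y ==> eU (f x) (f y)].

Definition is_whom (T U : finType) (eT : rel T) (eU : rel U) (f : T -> U) : bool :=
  [forall x, forall y, eT x y ==> ((f x == f y) || eU (f x) (f y))].

Definition nHom (i a n : nat) : nat :=
  #|[set f : {ffun 'I_a -> 'I_n} |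
      is_hom (@path_adj a) (@path_adj n) f &&
      [forall x : 'I_a, (val x == 0) ==> (val (f x) == i)]]|.

Definition nWHom (j a k : nat) : nat :=
  #|[set f : {ffun 'I_a -> 'I_k} |
      is_whom (@path_adj a) (@path_adj k) f &&
      [forall x : 'I_a, (val x == 0) ==> (val (f x) == j)]]|.

Definition nWHom2 (i j m n k : nat) : nat :=
  #|[set f : {ffun 'I_m -> 'I_n * 'I_k} |
      is_whom (@path_adj m) (@box_adj n k) f &&
      [forall x : 'I_m, (val x == 0) ==>
         ((val (f x).1 == i) && (val (f x).2 == j))]]|.

From mathcomp Require Import all_boot all_order all_algebra.
From mathcomp Require Import lra.
Import GRing.Theory Num.Theory.
Set Implicit Arguments. Unset Strict Implicit. Unset Printing Implicit Defensive.

(* A weak homomorphism P_m -> P_n [] P_k is a walk of length m - 1 in which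
   every step either moves the first coordinate along P_n, or moves the second
   coordinate along P_k or leaves it in place.  Marking the h steps that move
   the first coordinate splits such a walk into a walk of length h in P_n and a
   weak walk of length m - 1 - h in P_k; as P_n has no loops the marking is
   determined by the walk.  Splitting off the first step, Pascal's rule turns
   this into an induction on the length. *)

Section Walks.
Variable U : finType.
Implicit Types (r : rel U) (u : U).

Definition fcons a u (g : {ffun 'I_a -> U}) : {ffun 'I_a.+1 -> U} :=
  [ffun i => if unlift ord0 i is Some j then g j else u].

Lemma fcons0 a u (g : {ffun 'I_a -> U}) : fcons u g ord0 = u.
Proof. by rewrite ffunE unlift_none. Qed.

Lemma fcons_lift a u (g : {ffun 'I_a -> U}) j : fcons u g (lift ord0 j) = g j.
Proof. by rewrite ffunE liftK. Qed.

Lemma fcons_inj a u : injective (@fcons a u).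
Proof.
by move=> g g' eq_gg'; apply/ffunP => j; rewrite -(fcons_lift u g) eq_gg' fcons_lift.
Qed.

Lemma fcons_eta a (f : {ffun 'I_a.+1 -> U}) :
  f = fcons (f ord0) [ffun j => f (lift ord0 j)].
Proof. by apply/ffunP => i; rewrite ffunE; case: unliftP => [j|] ->; rewrite ?ffunE. Qed.

Lemma codom_fcons a u (g : {ffun 'I_a -> U}) : codom (fcons u g) = u :: codom g.
Proof.
rewrite !codomE enum_ordSl /= fcons0 -map_comp.
by congr cons; apply: eq_map => j /=; rewrite fcons_lift.
Qed.

Lemma nth_codom a u (f : {ffun 'I_a -> U}) (i : 'I_a) : nth u (codom f) i = f i.
Proof. by rewrite codomE (nth_map i) ?size_enum_ord // nth_ord_enum. Qed.

Lemma is_hom_sorted r a (f : {ffun 'I_a -> U}) :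
  symmetric r -> is_hom (@path_adj a) r f = sorted r (codom f).
Proof.
move=> sym_r; case: a f => [|a] f.
  by rewrite codomE enum_ord0; apply/forallP => -[].
apply/forallP/(sortedP (f ord0)) => [hom_f i | sorted_f x].
  rewrite size_codom card_ord => lt_i1a.
  have lt_ia : i < a.+1 by apply: ltnW.
  rewrite (nth_codom _ _ (Ordinal lt_ia)) (nth_codom _ _ (Ordinal lt_i1a)).
  by have /forallP/(_ (Ordinal lt_i1a)) := hom_f (Ordinal lt_ia); rewrite /path_adj /= eqxx.
apply/forallP => y; apply/implyP; rewrite /path_adj => /orP[]/eqP x1_y.
  by have := sorted_f x; rewrite size_codom card_ord x1_y ltn_ord !nth_codom; apply.
by have := sorted_f y; rewrite size_codom card_ord x1_y ltn_ord !nth_codom sym_r; apply.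
Qed.

Definition walks r a u : {set {ffun 'I_a.+1 -> U}} :=
  [set f : {ffun 'I_a.+1 -> U} | (f ord0 == u) && sorted r (codom f)].

Definition nwalks r a u := #|walks r a u|.

Lemma nwalks0 r u : nwalks r 0 u = 1.
Proof.
apply/eqP/cards1P; exists [ffun=> u]; apply/setP => f.
rewrite !inE codomE enum_ordSl enum_ord0 andbT.
apply/eqP/eqP => [f0_u | ->]; last by rewrite ffunE.
by apply/ffunP => i; rewrite ord1 f0_u ffunE.
Qed.

Lemma path_codom r a u (g : {ffun 'I_a.+1 -> U}) :
  path r u (codom g) = r u (g ord0) && sorted r (codom g).
Proof. by rewrite codomE enum_ordSl. Qed.

Lemma walksS r a u :
  walks r a.+1 u =
  fcons u @: [set g : {ffun 'I_a.+1 -> U} | r u (g ord0) && sorted r (codom g)].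
Proof.
apply/setP => f; rewrite inE; apply/andP/imsetP => [[/eqP f0_u] | [g]].
  rewrite {1}(fcons_eta f) codom_fcons /= path_codom f0_u => sorted_f.
  by exists [ffun j => f (lift ord0 j)]; rewrite ?inE // {1}(fcons_eta f) f0_u.
by rewrite inE => ug_sorted ->; rewrite fcons0 codom_fcons /= path_codom.
Qed.

Lemma nwalksS r a u : nwalks r a.+1 u = \sum_(v | r u v) nwalks r a v.
Proof.
rewrite /nwalks walksS card_imset; last exact: fcons_inj.
rewrite -sum1_card (partition_big (fun g : {ffun 'I_a.+1 -> U} => g ord0) (r u)) => [|g];
  last by rewrite inE => /andP[].
apply: eq_bigr => v ruv; rewrite -sum1_card; apply: eq_bigl => g.
by rewrite !inE andbC; case: eqVneq => // ->; rewrite ruv.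
Qed.

Lemma eq_nwalks (r r' : rel U) a u :
  r =2 r' -> nwalks r a u = nwalks r' a u.
Proof.
move=> eq_r; apply: eq_card => f; rewrite !inE; congr (_ && _).
by case: (codom f) => //= v s; apply: eq_path.
Qed.

End Walks.

Definition refl_rel (T : eqType) (e : rel T) : rel T := fun x y => (x == y) || e x y.

Definition box_rel (X Y : eqType) (rX : rel X) (rY : rel Y) : rel (X * Y) :=
  fun p q => ((p.1 == q.1) && rY p.2 q.2) || (rX p.1 q.1 && (p.2 == q.2)).

Lemma refl_rel_sym (T : eqType) (e : rel T) : symmetric e -> symmetric (refl_rel e).
Proof. by move=> sym_e x y; rewrite /refl_rel eq_sym sym_e. Qed.

Lemma box_rel_sym (X Y : eqType) (rX : rel X) (rY : rel Y) :
  symmetric rX -> symmetric rY -> symmetric (box_rel rX rY).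
Proof.
by move=> sym_rX sym_rY p q; rewrite /box_rel (eq_sym p.1) (eq_sym p.2) sym_rX sym_rY.
Qed.

Lemma refl_box_rel (X Y : eqType) (rX : rel X) (rY : rel Y) :
  refl_rel (box_rel rX rY) =2 box_rel rX (refl_rel rY).
Proof.
move=> [x y] [a b]; rewrite /refl_rel /box_rel /= xpair_eqE.
by case: eqVneq => [->|_]; case: eqVneq => [->|_]; rewrite /= ?orbT ?orbF ?andbT ?andbF.
Qed.

Lemma sum_binS (a b : nat -> nat) N :
  \sum_(h < N.+2) 'C(N.+1, h) * a h * b (N.+1 - h) =
  \sum_(h < N.+1) 'C(N, h) * a h * b (N.+1 - h) +
  \sum_(h < N.+1) 'C(N, h) * a h.+1 * b (N - h).
Proof.
rewrite big_ord_recl /=.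
under eq_bigr => h _ do rewrite /bump leq0n add1n binS !mulnDl subSS.
rewrite big_split /= addnA; congr (_ + _).
rewrite [RHS]big_ord_recl big_ord_recr /= (bin_small (ltnSn N)) !mul0n addn0 !bin0.
by congr (_ + _); apply: eq_bigr => h _; rewrite /bump leq0n add1n subSS.
Qed.

Section BoxWalks.
Variables (X Y : finType) (rX : rel X) (rY : rel Y).
Hypothesis rX_irr : irreflexive rX.

Lemma sum_box_rel (F : X * Y -> nat) x y :
  \sum_(q | box_rel rX rY (x, y) q) F q =
  \sum_(b | rY y b) F (x, b) + \sum_(a | rX x a) F (a, y).
Proof.
rewrite (bigID (fun q => q.1 == x)) /=; congr (_ + _).
  have -> : \sum_(b | rY y b) F (x, b) = \sum_(a | a == x) \sum_(b | rY y b) F (a, b).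
    by rewrite big_pred1_eq.
  rewrite pair_big_dep; apply: eq_big => [[a b]|[]//] /=; rewrite /box_rel /=.
  by case: (eqVneq a x) => [->|_]; rewrite ?eqxx ?rX_irr ?andbF ?andbT /= ?orbF.
rewrite [RHS](eq_bigr (fun a => \sum_(b | b == y) F (a, b))) => [|a _]; last first.
  by rewrite big_pred1_eq.
rewrite pair_big_dep; apply: eq_big => [[a b]|[]//] /=.
rewrite /box_rel /=; case: (eqVneq a x) => [->|_]; first by rewrite rX_irr andbF.
by rewrite andbT [y == b]eq_sym.
Qed.

Lemma nwalks_box_rel N x y :
  nwalks (box_rel rX rY) N (x, y) =
  \sum_(h < N.+1) 'C(N, h) * nwalks rX h x * nwalks rY (N - h) y.
Proof.
elim: N x y => [|N IH] x y; first by rewrite big_ord1 !nwalks0.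
rewrite nwalksS sum_box_rel (sum_binS (fun h => nwalks rX h x) (fun l => nwalks rY l y)).
under eq_bigr => b _ do rewrite IH.
under [X in _ + X]eq_bigr => a _ do rewrite IH.
rewrite exchange_big [X in _ + X]exchange_big /=.
congr (_ + _); apply: eq_bigr => h _.
  by rewrite (subSn (ltnSE (ltn_ord h))) nwalksS big_distrr.
by rewrite nwalksS big_distrr big_distrl.
Qed.
End BoxWalks.

Lemma path_adj_sym n : symmetric (@path_adj n).
Proof. by move=> x y; rewrite /path_adj orbC. Qed.

Lemma path_adj_irr n : irreflexive (@path_adj n).
Proof. by move=> x; rewrite /path_adj orbb gtn_eqF. Qed.

Lemma card_hom_start (U : finType) (r : rel U) (P : pred U) a u :
  symmetric r -> P =1 pred1 u ->
  #|[set f : {ffun 'I_a.+1 -> U} | is_hom (@path_adj a.+1) r f &&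
      [forall x : 'I_a.+1, (val x == 0) ==> P (f x)]]| = nwalks r a u.
Proof.
move=> sym_r P_u; apply: eq_card => f; rewrite !inE is_hom_sorted // andbC.
congr (_ && _); apply/forallP/idP => [/(_ ord0)/implyP/(_ isT)|f0_u x].
  by rewrite P_u.
by apply/implyP => /eqP x0; rewrite P_u (_ : x = ord0) //; apply: val_inj.
Qed.

Lemma nHomE i a n (lt_in : i < n) :
  nHom i a.+1 n = nwalks (@path_adj n) a (Ordinal lt_in).
Proof.
apply: (card_hom_start (P := fun v => val v == i)) => [|v]; first exact: path_adj_sym.
by rewrite /= -val_eqE.
Qed.

Lemma nWHomE j a k (lt_jk : j < k) :
  nWHom j a.+1 k = nwalks (refl_rel (@path_adj k)) a (Ordinal lt_jk).
Proof.
apply: (card_hom_start (P := fun v => val v == j)) => [|v].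
  exact/refl_rel_sym/path_adj_sym.
by rewrite /= -val_eqE.
Qed.

Lemma nWHom2E i j a n k (lt_in : i < n) (lt_jk : j < k) :
  nWHom2 i j a.+1 n k =
  nwalks (box_rel (@path_adj n) (refl_rel (@path_adj k))) a (Ordinal lt_in, Ordinal lt_jk).
Proof.
rewrite -(eq_nwalks _ _ (refl_box_rel _ _)).
apply: (card_hom_start (P := fun p => (val p.1 == i) && (val p.2 == j))) => [|[v w]].
  exact/refl_rel_sym/box_rel_sym/path_adj_sym/path_adj_sym.
by rewrite /= xpair_eqE -!val_eqE.
Qed.

Lemma ltn_of_lt_half_sub1 (a b : nat) : ((a%:R : rat) < b%:R / 2 - 1)%R -> (a < b)%N.
Proof. by move=> lt_ab; rewrite -(ltr_nat rat); have := ler0n rat b; lra. Qed.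

Unset Implicit Arguments.
Theorem theorem3 (m n k i j : nat) :
  (0 < m)%N -> (0 < n)%N -> (0 < k)%N ->
  ((i%:R : rat) < (n%:R / 2 - 1))%R ->
  ((j%:R : rat) < (k%:R / 2 - 1))%R ->
  nWHom2 i j m n k =
  (\sum_(h < m) 'C(m - 1, h) * nHom i h.+1 n * nWHom j (m - h) k)%N.
Proof.
move=> m_gt0 _ _ /ltn_of_lt_half_sub1 lt_in /ltn_of_lt_half_sub1 lt_jk.
case: m m_gt0 => // N _.
rewrite (nWHom2E _ lt_in lt_jk) (nwalks_box_rel _ (@path_adj_irr n)).
apply: eq_bigr => h _.
by rewrite subn1 (nHomE _ lt_in) (subSn (ltnSE (ltn_ord h))) (nWHomE _ lt_jk).
Qed.
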